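(* Let $n<\infty$ be a positive integer and let $\mathcal{F}$ be a family of (finite) metric spaces each of cardinality at most $n$. Then for all $X,Y\in\mathcal{F}$, $$\widehat{d}_{\mathrm{GH}}(X,Y)\le d_{\mathrm{GH}}(X,Y)\le (2n-1)\,\widehat{d}_{\mathrm{GH}}(X,Y),$$ i.e. the Gromov--Hausdorff distance and the modified Gromov--Hausdorff distance are Lipschitz-equivalent on $\mathcal{F}$ with Lipschitz constant at most $2n-1$.
   Context: For a map $f:X\to Y$ between metric spaces, its distortion is $\operatorname{dis}(f)=\sup_{x,x'\in X}|d_X(x,x')-d_Y(f(x),f(x'))|$. For $f:X\to Y$, $g:Y\to X$, the codistortion is $\operatorname{codis}(f,g)=\sup_{x\in X,y\in Y}|d_X(x,g(y))-d_Y(f(x),y)|$. For compact metric spaces $X,Y$, the Gromov--Hausdorff distance $d_{\mathrm{GH}}(X,Y)$ is the infimum, over metric spaces $Z$ and isometric embeddings of $X$ and $Y$ into $Z$, of the Hausdorff distance in $Z$ between the images; equivalently $d_{\mathrm{GH}}(X,Y)=\frac12\inf_{f:X\to Y,\,g:Y\to X}\max\{\operatorname{dis}(f),\operatorname{dis}(g),\operatorname{codis}(f,g)\}$. The modified Gromov--Hausdorff distance is $\widehat{d}_{\mathrm{GH}}(X,Y)=\frac12\max\{\inf_{f:X\to Y}\operatorname{dis}(f),\inf_{g:Y\to X}\operatorname{dis}(g)\}$. *)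

From HB Require Import structures.
From mathcomp Require Import all_boot all_order all_algebra.
From mathcomp Require Import all_classical all_reals.
Set Implicit Arguments. Unset Strict Implicit. Unset Printing Implicit Defensive.
Import Order.TTheory GRing.Theory Num.Theory.
Local Open Scope ring_scope.
Local Open Scope classical_set_scope.

Definition is_metric (R : realType) (T : finType) (d : T -> T -> R) : Prop :=
  [/\ (forall x y, 0 <= d x y),
      (forall x y, d x y = 0 <-> x = y),
      (forall x y, d x y = d y x) &
      (forall x y z, d x z <= d x y + d y z)].

Definition dis (R : realType) (X Y : finType) (dX : X -> X -> R) (dY : Y -> Y -> R)
  (f : X -> Y) : R :=
  \big[Num.max/0]_(p : X * X) `|dX p.1 p.2 - dY (f p.1) (f p.2)|.

Definition codis (R : realType) (X Y : finType) (dX : X -> X -> R) (dY : Y -> Y -> R)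
  (f : X -> Y) (g : Y -> X) : R :=
  \big[Num.max/0]_(p : X * Y) `|dX p.1 (g p.2) - dY (f p.1) p.2|.

Definition dGH (R : realType) (X Y : finType) (dX : X -> X -> R) (dY : Y -> Y -> R) : R :=
  2^-1 * inf [set Num.max (dis dX dY fg.1) (Num.max (dis dY dX fg.2) (codis dX dY fg.1 fg.2))
             | fg in [set: (X -> Y) * (Y -> X)]].

Definition mdGH (R : realType) (X Y : finType) (dX : X -> X -> R) (dY : Y -> Y -> R) : R :=
  2^-1 * Num.max (inf [set dis dX dY f | f in [set: X -> Y]])
                 (inf [set dis dY dX g | g in [set: Y -> X]]).

From HB Require Import structures.
From mathcomp Require Import all_boot all_order all_algebra.
From mathcomp Require Import all_classical all_reals.
From mathcomp Require Import lra zify.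
Set Implicit Arguments. Unset Strict Implicit. Unset Printing Implicit Defensive.
Import Order.TTheory GRing.Theory Num.Theory.
Local Open Scope ring_scope.
Local Open Scope classical_set_scope.

(* The lower bound holds because a pair (f, g) contains a map f and a map g.
   For the upper bound, take f : X -> Y and g : Y -> X of distortion at most
   δ, and let T be the map on X + Y sending x to f x and y to g y: one step
   of T changes the distance between two points on the same side by at most
   δ.  The sets X ⊇ g(Y) ⊇ gf(X) ⊇ gfg(Y) ⊇ ..., i.e. T^k applied to X or Y
   according to the parity of k, form a decreasing chain of nonempty subsets
   of X, so two consecutive ones coincide for some k < n.  Relating x and y
   when T^a x = T^b y, with {a, b} = {k, k + 1}, is then a correspondence,
   and its distortion is at most (a + b)δ <= (2n - 1)δ. *)

Definition is_corr (X Y : Type) (C : X -> Y -> Prop) : Prop :=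
  (forall x, exists y, C x y) /\ (forall y, exists x, C x y).

Definition dGH_cost (R : realType) (X Y : finType) (dX : X -> X -> R)
    (dY : Y -> Y -> R) (fg : (X -> Y) * (Y -> X)) : R :=
  Num.max (dis dX dY fg.1) (Num.max (dis dY dX fg.2) (codis dX dY fg.1 fg.2)).

Lemma dGHE (R : realType) (X Y : finType) (dX : X -> X -> R) (dY : Y -> Y -> R) :
  dGH dX dY = 2^-1 * inf (range (dGH_cost dX dY)).
Proof. by []. Qed.

Section Distortion.
Variables (R : realType) (X Y : finType) (dX : X -> X -> R) (dY : Y -> Y -> R).

Lemma dis_ge0 f : 0 <= dis dX dY f.
Proof. by rewrite /dis; elim/big_ind: _ => //= a b ha hb; rewrite le_max ha. Qed.

Lemma le_dis f x x' : `|dX x x' - dY (f x) (f x')| <= dis dX dY f.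
Proof.
exact: (le_bigmax _ (fun p : X * X => `|dX p.1 p.2 - dY (f p.1) (f p.2)|) (x, x')).
Qed.

Lemma dis_le f c : 0 <= c ->
  (forall x x', `|dX x x' - dY (f x) (f x')| <= c) -> dis dX dY f <= c.
Proof. by move=> c_ge0 fc; apply: bigmax_le => // -[x x'] _; apply: fc. Qed.

Lemma codis_le f g c : 0 <= c ->
  (forall x y, `|dX x (g y) - dY (f x) y| <= c) -> codis dX dY f g <= c.
Proof. by move=> c_ge0 fgc; apply: bigmax_le => // -[x y] _; apply: fgc. Qed.

Lemma dGH_cost_ge0 fg : 0 <= dGH_cost dX dY fg.
Proof. by rewrite le_max dis_ge0. Qed.

End Distortion.

Section Correspondence.
Variables (R : realType) (X Y : finType) (dX : X -> X -> R) (dY : Y -> Y -> R).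

Lemma exists_maps_of_corr (C : X -> Y -> Prop) c : 0 <= c -> is_corr C ->
    (forall x y x' y', C x y -> C x' y' -> `|dX x x' - dY y y'| <= c) ->
  exists fg, dGH_cost dX dY fg <= c.
Proof.
move=> c_ge0 [/fin_all_exists[f Cf] /fin_all_exists[g Cg]] C_dist.
exists (f, g); rewrite /dGH_cost /= !ge_max; apply/and3P; split.
- by apply: dis_le => // x x'; apply: C_dist.
- by apply: dis_le => // y y'; rewrite distrC; apply: C_dist.
- by apply: codis_le => // x y; apply: C_dist.
Qed.

End Correspondence.

Section RangeInf.
Variables (R : realType) (A B : Type).

Lemma inf_range_le (F : A -> R) : (forall a, 0 <= F a) ->
  forall a, inf (range F) <= F a.
Proof. by move=> F_ge0 a; apply: ge_inf; [exists 0 => _ [a' _ <-] | exists a]. Qed.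

Lemma le_inf_range (F : A -> R) (a0 : A) c :
  (forall a, c <= F a) -> c <= inf (range F).
Proof.
by move=> c_le; apply: lb_le_inf => [|_ [a _ <-]]; [exists (F a0), a0 | apply: c_le].
Qed.

Lemma le_max_inf_range (F : A -> R) (G : B -> R) (a0 : A) (b0 : B) c :
    (forall a b, c <= Num.max (F a) (G b)) ->
  c <= Num.max (inf (range F)) (inf (range G)).
Proof.
move=> c_le; rewrite leNgt gt_max; apply/negP => /andP[ltF ltG].
have neF : range F !=set0 by exists (F a0), a0.
have neG : range G !=set0 by exists (G b0), b0.
have [_ [a _ <-] Fa] := inf_lt neF ltF.
have [_ [b _ <-] Gb] := inf_lt neG ltG.
by have := c_le a b; rewrite leNgt gt_max Fa Gb.
Qed.

End RangeInf.

Lemma decreasing_sets_stable (T : finType) (A : nat -> {set T}) n :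
    (forall k, A k.+1 \subset A k) -> (0 < #|A n|)%N -> (#|A 0| <= n)%N ->
  exists2 k, (k < n)%N & A k.+1 = A k.
Proof.
move=> A_decr An0 A0n; apply: contrapT => no_stable.
have card_decr k : (k < n)%N -> (#|A k.+1| < #|A k|)%N.
  move=> lt_kn; rewrite ltnNge; apply/negP => le_card.
  by apply: no_stable; exists k => //; apply/eqP; rewrite eqEcard A_decr.
have card_le k : (k <= n)%N -> (#|A k| + k <= #|A 0|)%N.
  elim: k => [|k IHk] le_kn; first by rewrite addn0.
  by have := card_decr k le_kn; have := IHk (ltnW le_kn); lia.
by have := card_le n (leqnn n); lia.
Qed.

Section PingPong.
Variables (X Y : finType) (f : X -> Y) (g : Y -> X).

Definition pingpong (z : X + Y) : X + Y :=
  match z with inl x => inr (f x) | inr y => inl (g y) end.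

Definition same_side (z z' : X + Y) : bool :=
  match z, z' with inl _, inl _ | inr _, inr _ => true | _, _ => false end.

Lemma same_side_iter j z z' :
  same_side (iter j pingpong z) (iter j pingpong z') = same_side z z'.
Proof.
by elim: j => //= j <-; case: (iter j _ z) => ?; case: (iter j _ z') => ?.
Qed.

Definition meets a b x y := iter a pingpong (inl x) = iter b pingpong (inr y).

Section Distance.
Variables (R : realType) (dX : X -> X -> R) (dY : Y -> Y -> R) (del : R).
Hypotheses (dis_f : dis dX dY f <= del) (dis_g : dis dY dX g <= del).

(* Points on different sides are never compared, so their distance is junk. *)
Definition sum_dist (z z' : X + Y) : R :=
  match z, z' with
  | inl x, inl x' => dX x x'
  | inr y, inr y' => dY y y'
  | _, _ => 0
  end.

Lemma sum_dist_pingpong z z' : same_side z z' ->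
  `|sum_dist (pingpong z) (pingpong z') - sum_dist z z'| <= del.
Proof.
case: z => [x|y]; case: z' => [x'|y'] //= _; rewrite distrC.
  exact: le_trans (le_dis _ _ _ _ _) dis_f.
exact: le_trans (le_dis _ _ _ _ _) dis_g.
Qed.

Lemma sum_dist_iter j z z' : same_side z z' ->
  `|sum_dist (iter j pingpong z) (iter j pingpong z') - sum_dist z z'|
    <= j%:R * del.
Proof.
move=> zz'; elim: j => [|j IHj] /=; first by rewrite subrr normr0 mul0r.
have := @sum_dist_pingpong (iter j pingpong z) (iter j pingpong z').
rewrite same_side_iter => /(_ zz') step.
apply: le_trans (ler_distD (sum_dist (iter j pingpong z) (iter j pingpong z')) _ _) _.
by rewrite -natr1 mulrDl mul1r; lra.
Qed.

Lemma meets_dist a b x y x' y' : meets a b x y -> meets a b x' y' ->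
  `|dX x x' - dY y y'| <= (a + b)%:R * del.
Proof.
move=> xy x'y'.
have := @sum_dist_iter a (inl x) (inl x') isT.
have := @sum_dist_iter b (inr y) (inr y') isT.
rewrite /= xy x'y' => dist_b dist_a.
set Dy := sum_dist (iter b pingpong (inr y)) (iter b pingpong (inr y')).
apply: le_trans (ler_distD Dy _ _) _.
by rewrite natrD mulrDl distrC; lra.
Qed.

End Distance.

Definition side k : {set X + Y} :=
  if odd k then [set inr y | y : Y] else [set inl x | x : X].

Definition side_image k : {set X + Y} := [set iter k pingpong z | z in side k].

Lemma side_image_subset k : side_image k.+1 \subset side_image k.
Proof.
apply/fintype.subsetP => _ /imsetP[z side_z ->]; rewrite iterSr; apply: imset_f.
by move: side_z; rewrite /side /=; case: (odd k) => /imsetP[? _ ->]; apply: imset_f.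
Qed.

Lemma side_image_eq_match i j z : side_image i = side_image j -> z \in side i ->
  exists2 z', z' \in side j & iter j pingpong z' = iter i pingpong z.
Proof.
move=> eq_ij side_z; have : iter i pingpong z \in side_image j.
  by rewrite -eq_ij; apply: imset_f.
by case/imsetP=> z' side_z' ->; exists z'.
Qed.

Lemma side_image_stable_corr k : side_image k.+1 = side_image k ->
  exists a b, (a + b = k.*2.+1)%N /\ is_corr (meets a b).
Proof.
move=> stable; have up := side_image_eq_match stable.
have down := side_image_eq_match (esym stable).
rewrite /side /= in up down; case odd_k: (odd k); rewrite odd_k /= in up down.
- exists k.+1, k; split; first lia; split=> [x|y].
    by have [_ /imsetP[y _ ->] meet] := up (inl x) (imset_f _ isT); exists y.
  by have [_ /imsetP[x _ ->] meet] := down (inr y) (imset_f _ isT); exists x.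
- exists k, k.+1; split; first lia; split=> [x|y].
    by have [_ /imsetP[y _ ->] meet] := down (inl x) (imset_f _ isT); exists y.
  by have [_ /imsetP[x _ ->] meet] := up (inr y) (imset_f _ isT); exists x.
Qed.

End PingPong.

Lemma exists_short_meets_corr (X Y : finType) (f : X -> Y) (g : Y -> X) n :
    X -> (#|X| <= n)%N ->
  exists a b, (a + b <= 2 * n - 1)%N /\ is_corr (meets f g a b).
Proof.
move=> x0 card_X; have [|||k lt_kn] := @decreasing_sets_stable _ (side_image f g) n.
- exact: side_image_subset.
- rewrite card_gt0 imset_eq0 /side; apply/set0Pn.
  by case: (odd n); [exists (inr (f x0)) | exists (inl x0)]; apply: imset_f.
- by rewrite (leq_trans (leq_imset_card _ _)) // (leq_trans (leq_imset_card _ _)).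
move=> /side_image_stable_corr[a [b [ab corr]]].
by exists a, b; split; first lia.
Qed.

Section GromovHausdorff.
Variables (R : realType) (X Y : finType) (dX : X -> X -> R) (dY : Y -> Y -> R).
Variables (x0 : X) (y0 : Y).

Lemma mdGH_le_dGH : mdGH dX dY <= dGH dX dY.
Proof.
rewrite /mdGH dGHE ler_pM2l ?invr_gt0 ?ltr0n // ge_max.
apply/andP; split; apply: (le_inf_range (fun=> y0, fun=> x0)) => -[f g].
all: rewrite /dGH_cost /=.
- by apply: le_trans (inf_range_le (@dis_ge0 _ _ _ dX dY) f) _; rewrite le_max lexx.
- apply: le_trans (inf_range_le (@dis_ge0 _ _ _ dY dX) g) _.
  by rewrite le_max orbC le_max lexx.
Qed.

Lemma dGH_le_mdGH n : (#|X| <= n)%N -> dGH dX dY <= (2 * n - 1)%:R * mdGH dX dY.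
Proof.
move=> card_X; have n_gt0 : (0 < n)%N.
  by apply: leq_trans card_X; apply/card_gt0P; exists x0.
have N_gt0 : 0 < (2 * n - 1)%:R :> R by rewrite ltr0n; lia.
have inf_le f g : inf (range (dGH_cost dX dY)) <=
    (2 * n - 1)%:R * Num.max (dis dX dY f) (dis dY dX g).
  set del := Num.max (dis dX dY f) (dis dY dX g).
  have dis_f : dis dX dY f <= del by rewrite le_max lexx.
  have dis_g : dis dY dX g <= del by rewrite le_max lexx orbT.
  have del_ge0 : 0 <= del := le_trans (dis_ge0 _ _ _) dis_f.
  have [a [b [ab corr]]] := exists_short_meets_corr f g x0 card_X.
  have [fg fg_le] := exists_maps_of_corr (mulr_ge0 (ler0n _ (a + b)) del_ge0) corr
    (meets_dist dis_f dis_g (a:=a) (b:=b)).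
  apply: le_trans (inf_range_le (@dGH_cost_ge0 _ _ _ dX dY) fg) (le_trans fg_le _).
  by rewrite ler_wpM2r // ler_nat.
rewrite dGHE /mdGH mulrCA ler_pM2l ?invr_gt0 ?ltr0n // -ler_pdivrMl //.
apply: (le_max_inf_range (F := dis dX dY) (G := dis dY dX) (fun=> y0) (fun=> x0)).
move=> f g.
by rewrite ler_pdivrMl // inf_le.
Qed.

End GromovHausdorff.

Theorem theorem1 (R : realType) (n : nat) (hn : (0 < n)%N)
  (X : finType) (dX : X -> X -> R) (Y : finType) (dY : Y -> Y -> R)
  (hX : is_metric dX) (hY : is_metric dY)
  (hX0 : (0 < #|X|)%N) (hY0 : (0 < #|Y|)%N)
  (hXn : (#|X| <= n)%N) (hYn : (#|Y| <= n)%N) :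
  mdGH dX dY <= dGH dX dY /\ dGH dX dY <= (2 * n - 1)%:R * mdGH dX dY.
Proof.
have [x0 _] := card_gt0P hX0; have [y0 _] := card_gt0P hY0.
by split; [apply: mdGH_le_dGH | apply: dGH_le_mdGH].
Qed.
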